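(* Let $F$ be an algebraically closed field of positive characteristic $p$. A rational function $\phi \in F(z)$ has no finite critical point if and only if its continued fraction expansion has the form \[ \phi(z) = [q_0(z^p), q_1(z^p), \ldots, q_n(z^p) + az] \] for some integer $n \geq 0$, polynomials $q_0, q_1, \ldots, q_n \in F[z]$, and a nonzero element $a \in F$.
   Context: Continued fraction expansion: for $\phi \in F(z)$, repeated use of the division algorithm gives unique polynomials $f_0, \ldots, f_n \in F[z]$, with $f_1, \ldots, f_n$ nonconstant ($f_0$ may be constant or zero), such that $\phi = f_0 + \cfrac{1}{f_1 + \cfrac{1}{\ddots + \cfrac{1}{f_n}}}$; this is written $\phi = [f_0, f_1, \ldots, f_n]$. Critical points: for $x \in F$, choose a fractional linear transformation $\sigma$ with coefficients in $F$ such that $\sigma(\phi(x)) \neq \infty$; $x$ is a finite critical point of $\phi$ if $\frac{d(\sigma\circ\phi)}{dz}(x) = 0$ (this is independent of the choice of $\sigma$). The point $\infty$ is a critical point if $\frac{d(\sigma \circ \phi(1/z))}{dz}\big|_{z=0} = 0$ for such a $\sigma$ with $\sigma(\phi(\infty)) \neq \infty$. *)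

From mathcomp Require Import all_boot all_algebra.
Set Implicit Arguments. Unset Strict Implicit. Unset Printing Implicit Defensive.
Import GRing.Theory.
Local Open Scope ring_scope.

Notation ratfun F := {fraction {poly F}}.

Definition polyF (F : fieldType) (f : {poly F}) : ratfun F := @FracField.tofrac _ f.

Fixpoint cf_value (F : fieldType) (s : seq {poly F}) : ratfun F :=
  match s with
  | [::] => 0
  | [:: f] => polyF f
  | f :: s' => polyF f + (cf_value s')^-1
  end.

Definition cf_expansion (F : fieldType) (phi : ratfun F) (s : seq {poly F}) : Prop :=
  [/\ (0 < size s)%N,
      forall i : nat, (0 < i < size s)%N -> (1 < size (nth 0%R s i))%N
    & phi = cf_value s].

Definition mobius_comp (F : fieldType) (a b c d : F) (phi : ratfun F) : ratfun F :=
  (polyF a%:P * phi + polyF b%:P) / (polyF c%:P * phi + polyF d%:P).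

(* x in F is a finite critical point of phi: for a fractional linear
   transformation sigma with coefficients in F with sigma(phi(x)) <> oo,
   i.e. sigma o phi = N/D with D(x) <> 0, the derivative
   d(sigma o phi)/dz at x, = (N'(x) D(x) - N(x) D'(x)) / D(x)^2, vanishes. *)
Definition finite_critical_point (F : fieldType) (phi : ratfun F) (x : F) : Prop :=
  exists (a b c d : F) (N D : {poly F}),
    [/\ a * d - b * c != 0,
        polyF c%:P * phi + polyF d%:P != 0,
        mobius_comp a b c d phi = polyF N / polyF D,
        D.[x] != 0
      & ((N^`()).[x] * D.[x] - N.[x] * (D^`()).[x]) / D.[x] ^+ 2 = 0].

Definition cf_form (F : fieldType) (p n : nat) (q : nat -> {poly F}) (a : F)
  : seq {poly F} :=
  rcons [seq q i \Po 'X^p | i <- iota 0 n] (q n \Po 'X^p + a *: 'X).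

From mathcomp Require Import all_boot all_algebra.
From mathcomp Require Import zify ring.
Import GRing.Theory.
Local Open Scope ring_scope.

(* Writing phi = N / D, the finite critical points of phi are the roots of the
   Wronskian W(N, D) = N' D - N D', a quantity that Moebius transformations
   only rescale.  Over an algebraically closed field, phi has no finite
   critical point iff W(N, D) is a nonzero constant.  Euclidean division
   N = f D + R gives W(N, D) = f' D^2 + W(R, D), and comparing degrees forces
   f' = 0 as long as R != 0, in which case W(D, R) = - W(N, D) and the
   expansion of D / R continues; at the last step D is constant and f' is a
   nonzero constant.  In characteristic p, f' = 0 means f = q(z^p) and f' = a
   means f = q(z^p) + a z. *)

Section Wronskian.

Variable R : comNzRingType.
Implicit Types N D : {poly R}.

Definition wronskian N D : {poly R} := N^`() * D - N * D^`().

Lemma wronskian0l D : wronskian 0 D = 0.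
Proof. by rewrite /wronskian deriv0 !mul0r subrr. Qed.

Lemma wronskianC N D : wronskian D N = - wronskian N D.
Proof. by rewrite /wronskian opprB [D^`() * N]mulrC [D * N^`()]mulrC. Qed.

Lemma wronskian_mulDl f N D :
  wronskian (f * D + N) D = f^`() * D ^+ 2 + wronskian N D.
Proof.
rewrite /wronskian derivD derivM.
by move: (f^`()) (D^`()) (N^`()) => f1 D1 N1; ring.
Qed.

Lemma wronskian_mobius (a b c d : R) N D :
  wronskian (a%:P * N + b%:P * D) (c%:P * N + d%:P * D)
  = (a * d - b * c)%:P * wronskian N D.
Proof.
rewrite /wronskian !derivD !derivM !derivC polyCB !polyCM.
by move: a%:P b%:P c%:P d%:P (N^`()) (D^`()) => A B C E N1 D1; ring.
Qed.

(* Both sides are the numerator of d/dz (N1 / D1) = d/dz (N2 / D2), cleared of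
   denominators. *)
Lemma wronskian_cross N1 D1 N2 D2 :
  N1 * D2 = N2 * D1 -> wronskian N2 D2 * D1 ^+ 2 = wronskian N1 D1 * D2 ^+ 2.
Proof.
move=> eq12; have := congr1 deriv eq12; rewrite !derivM => deq12.
apply/eqP; rewrite -subr_eq0.
have -> : wronskian N2 D2 * D1 ^+ 2 - wronskian N1 D1 * D2 ^+ 2
   = (D1 * D2^`() + D1^`() * D2) * (N1 * D2 - N2 * D1)
     - D1 * D2 * (N1^`() * D2 + N1 * D2^`() - (N2^`() * D1 + N2 * D1^`())).
  by rewrite /wronskian; ring.
by rewrite eq12 deq12 !subrr !mulr0 subrr.
Qed.

End Wronskian.

Arguments wronskian {R}.
Arguments wronskian_cross {R N1 D1 N2 D2}.

Lemma size_wronskian_le {F : fieldType} {N D : {poly F}} :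
  N != 0 -> D != 0 -> (size (wronskian N D) <= size N + size D - 2)%N.
Proof.
move=> N0 D0; have dN := lt_size_deriv N0; have dD := lt_size_deriv D0.
have sND : (size (N^`() * D)%R <= size N + size D - 2)%N.
  apply: leq_trans (size_polyMleq _ _) _; lia.
have sDN : (size (N * D^`())%R <= size N + size D - 2)%N.
  apply: leq_trans (size_polyMleq _ _) _; lia.
apply: leq_trans (size_polyD _ _) _.
by rewrite size_polyN geq_max sND sDN.
Qed.

Section PositiveCharacteristic.

Variables (F : fieldType) (p : nat).
Hypothesis pcharFp : p \in [pchar F].

Lemma deriv_comp_Xp (q : {poly F}) : (q \Po 'X^p)^`() = 0.
Proof.
rewrite deriv_comp derivXn -mulr_natr -polyC_natr (pcharf0 pcharFp).
by rewrite polyC0 !mulr0.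
Qed.

Lemma deriv_eq0_comp_Xp (P : {poly F}) :
  P^`() = 0 -> exists q : {poly F}, P = q \Po 'X^p.
Proof.
move=> dP0; have p_gt0 : (0 < p)%N by apply/prime_gt0/(pcharf_prime pcharFp).
exists (\poly_(i < size P) P`_(i * p)); apply/polyP => i.
rewrite coef_comp_poly_Xn //; case: ifP => [p_dvd_i | p_ndvd_i].
  rewrite coef_poly divnK //; case: ltnP => // sPi.
  by rewrite nth_default // (leq_trans sPi) ?leq_div.
case: i p_ndvd_i => [|j]; first by rewrite dvdn0.
have := congr1 (fun r : {poly F} => r`_j) dP0.
rewrite /= coef_deriv coef0 -mulr_natr => /eqP.
rewrite mulf_eq0 => /orP[/eqP //|].
by rewrite -(dvdn_pcharf pcharFp) => ->.
Qed.

Lemma deriv_eq_polyC_comp_Xp (P : {poly F}) (a : F) :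
  P^`() = a%:P -> exists q : {poly F}, P = q \Po 'X^p + a *: 'X.
Proof.
move=> dPa; have [|q Pq] := @deriv_eq0_comp_Xp (P - a *: 'X).
  by rewrite derivB derivZ derivX dPa alg_polyC subrr.
by exists q; rewrite -Pq subrK.
Qed.

End PositiveCharacteristic.

Arguments deriv_eq0_comp_Xp {F p} pcharFp {P}.
Arguments deriv_eq_polyC_comp_Xp {F p} pcharFp {P a}.

Lemma addr_invf_div (K : fieldType) (f x y : K) :
  x != 0 -> f + (x / y)^-1 = (f * x + y) / x.
Proof. by move=> x0; rewrite invf_div mulrDl mulfK. Qed.

Section ContinuedFractions.

Variable F : fieldType.
Implicit Types (f N D : {poly F}) (s : seq {poly F}).

Lemma polyF_eq0 f : (polyF f == 0) = (f == 0).
Proof. exact: tofrac_eq0. Qed.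

Lemma polyF_mulDl_div f N D :
  D != 0 -> polyF (f * D + N) / polyF D = polyF f + (polyF D / polyF N)^-1.
Proof.
by move=> D0; rewrite addr_invf_div ?polyF_eq0 // /polyF tofracD tofracM.
Qed.

Lemma cf_value_cons f s :
  s != [::] -> cf_value (f :: s) = polyF f + (cf_value s)^-1.
Proof. by case: s. Qed.

Lemma cf_expansion_cons f psi s :
  cf_expansion psi s -> (1 < size (head 0%R s))%N ->
  cf_expansion (polyF f + psi^-1) (f :: s).
Proof.
case: s => [[]//|g s] [_ nonconst ->] head_nonconst; split=> //.
by case=> [|[|i]] //= lti; apply: (nonconst i.+1).
Qed.

Variable p : nat.

Lemma cf_form_neq_nil n (q : nat -> {poly F}) a : cf_form p n q a != [::].
Proof. by rewrite /cf_form; case: map. Qed.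

Lemma cf_formS n (q : nat -> {poly F}) a :
  cf_form p n.+1 q a = (q 0%N \Po 'X^p) :: cf_form p n (fun i => q i.+1) a.
Proof. by rewrite /cf_form /= -[in iota 1 n](addn0 1%N) iotaDl -map_comp. Qed.

End ContinuedFractions.

Section CriticalPoints.

Context {F : fieldType}.
Implicit Types (N D : {poly F}) (phi : ratfun F).

Lemma polyF_div_eq {N1 D1 N2 D2} : D1 != 0 -> D2 != 0 ->
  polyF N1 / polyF D1 = polyF N2 / polyF D2 -> N1 * D2 = N2 * D1.
Proof.
move=> D10 D20 /eqP; rewrite eqr_div ?polyF_eq0 // /polyF -!tofracM.
by rewrite tofrac_eq => /eqP.
Qed.

Lemma polyF_affine_div (a b : F) N D : D != 0 ->
  polyF a%:P * (polyF N / polyF D) + polyF b%:P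
  = polyF (a%:P * N + b%:P * D) / polyF D.
Proof.
move=> D0; rewrite /polyF tofracD !tofracM mulrDl mulrA mulfK //.
by rewrite tofrac_eq0.
Qed.

Lemma mobius_comp_div (a b c d : F) N D : D != 0 ->
  mobius_comp a b c d (polyF N / polyF D)
  = polyF (a%:P * N + b%:P * D) / polyF (c%:P * N + d%:P * D).
Proof.
move=> D0; rewrite /mobius_comp !polyF_affine_div //.
by rewrite invf_div mulrA mulfVK ?polyF_eq0.
Qed.

Lemma finite_critical_pointE phi x :
  finite_critical_point phi x <->
  exists (a b c d : F) N D,
    [/\ a * d - b * c != 0, polyF c%:P * phi + polyF d%:P != 0,
        mobius_comp a b c d phi = polyF N / polyF D, D.[x] != 0
      & root (wronskian N D) x].
Proof.
have rootE N D : D.[x] != 0 ->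
    ((N^`()).[x] * D.[x] - N.[x] * (D^`()).[x]) / D.[x] ^+ 2 = 0
    <-> root (wronskian N D) x.
  move=> Dx0; rewrite /root /wronskian !hornerE.
  split=> [/eqP|/eqP ->]; rewrite ?mul0r //.
  by rewrite mulf_eq0 invr_eq0 expf_eq0 (negbTE Dx0) orbF.
split=> [[a [b [c [d [N [D [? ? ? Dx0 /(rootE _ _ Dx0) ?]]]]]]]|].
  by exists a, b, c, d, N, D.
move=> [a [b [c [d [N [D [? ? ? Dx0 /(rootE _ _ Dx0) ?]]]]]]].
by exists a, b, c, d, N, D.
Qed.

Lemma no_finite_critical_point {N D} {c : F} :
  D != 0 -> c != 0 -> wronskian N D = c%:P ->
  forall x, ~ finite_critical_point (polyF N / polyF D) x.
Proof.
move=> D0 c0 WND x /finite_critical_pointE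
  [a [b [c' [d [N' [D' [det0 den0 mob D'x0 rootW]]]]]]].
have D'0 : D' != 0 by apply: contraNneq D'x0 => ->; rewrite horner0.
move: den0 mob; rewrite polyF_affine_div // mobius_comp_div //.
set N1 := a%:P * N + _; set D1 := c'%:P * N + _ => den0 mob.
have D10 : D1 != 0.
  by rewrite -polyF_eq0; apply: contraNneq den0 => ->; rewrite mul0r.
have := wronskian_cross (polyF_div_eq D10 D'0 mob).
rewrite wronskian_mobius WND => /(congr1 (horner^~ x)) /eqP.
rewrite -polyCM hornerM (eqP rootW) mul0r hornerM hornerC horner_exp eq_sym.
by rewrite !mulf_eq0 (negbTE det0) (negbTE c0) (negbTE D'x0).
Qed.

Lemma finite_critical_point_of_root {N D x} :
  coprimep N D -> D != 0 -> root (wronskian N D) x ->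
  finite_critical_point (polyF N / polyF D) x.
Proof.
move=> coND D0 rootW; apply/finite_critical_pointE.
have [Dx0|Dx0] := eqVneq D.[x] 0; last first.
  exists 1, 0, 0, 1, N, D; rewrite polyF_affine_div // mobius_comp_div //.
  rewrite polyC0 polyC1 !mul0r !mul1r addr0 add0r subr0 oner_eq0.
  by split=> //; rewrite divff ?polyF_eq0 ?oner_eq0.
have Nx0 : N.[x] != 0.
  apply: (coprimep_root (p := D)); first by rewrite coprimep_sym.
  by rewrite /root Dx0.
have N0 : N != 0 by apply: contraNneq Nx0 => ->; rewrite horner0.
have D'x0 : (D^`()).[x] = 0.
  move: rootW; rewrite /root /wronskian !hornerE Dx0 mulr0 sub0r oppr_eq0.
  by rewrite mulf_eq0 (negbTE Nx0) => /eqP.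
exists 0, 1, 1, 0, D, N; rewrite polyF_affine_div // mobius_comp_div //.
rewrite polyC0 polyC1 !mul0r !mul1r !add0r addr0 oppr_eq0 oner_eq0.
rewrite mulf_eq0 invr_eq0 !polyF_eq0 (negbTE N0) (negbTE D0).
by split=> //; rewrite /root /wronskian !hornerE Dx0 D'x0 !mul0r subrr.
Qed.

End CriticalPoints.

Lemma fraction_numden (R : idomainType) (phi : {fraction R}) :
  exists n d : R, d != 0 /\ phi = FracField.tofrac n / FracField.tofrac d.
Proof.
set x := repr phi; have dx0 := denom_ratioP x.
exists \n_x, \d_x; split=> //.
apply: (mulfI (_ : FracField.tofrac \d_x != 0)); first by rewrite tofrac_eq0.
rewrite mulrCA mulfV ?tofrac_eq0 // mulr1 -[phi]reprK -/x.
unlock FracField.tofrac; rewrite -[_ * _](FracField.pi_mul (Ratio \d_x 1) x).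
apply/eqmodP; rewrite /= FracField.equivfE /FracField.mulf.
by rewrite !numden_Ratio ?mulf_neq0 ?oner_neq0 // mulr1 mul1r.
Qed.

Lemma ratfun_coprime_numden {F : fieldType} (phi : ratfun F) :
  exists N D : {poly F}, [/\ D != 0, coprimep N D & phi = polyF N / polyF D].
Proof.
have [n [d [d0 ->]]] := @fraction_numden _ phi.
set g := gcdp n d.
have g0 : g != 0 by rewrite gcdp_eq0 negb_and d0 orbT.
have nE : n = n %/ g * g by rewrite divpK ?dvdp_gcdl.
have dE : d = d %/ g * g by rewrite divpK ?dvdp_gcdr.
exists (n %/ g), (d %/ g); split.
- by apply: contraNneq d0 => dg0; rewrite dE dg0 mul0r.
- by rewrite coprimep_div_gcd // d0 orbT.
- rewrite /polyF {1}nE {1}dE !tofracM invfM mulrACA mulfV ?mulr1 //.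
  by rewrite tofrac_eq0.
Qed.

Lemma mul_sqr_eq_polyC {F : fieldType} {g D : {poly F}} {c : F} :
  c != 0 -> g * D ^+ 2 = c%:P ->
  exists d, [/\ d != 0, D = d%:P & g = (c / d ^+ 2)%:P].
Proof.
move=> c0 gDc.
have gD0 : g * D ^+ 2 != 0 by rewrite gDc polyC_eq0.
have g0 : g != 0 by apply: contraNneq gD0 => ->; rewrite mul0r.
have D0 : D != 0 by apply: contraNneq gD0 => ->; rewrite expr0n mulr0.
have sD1 : size D = 1%N.
  have := congr1 (fun r : {poly F} => size r) gDc.
  rewrite /= size_polyC c0 expr2 !size_mul ?mulf_neq0 //.
  have : (0 < size g)%N by rewrite size_poly_gt0.
  have : (0 < size D)%N by rewrite size_poly_gt0.
  by move=> /=; set sg := size g; set sD := size D; lia.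
have DE := size1_polyC (eq_leq sD1); set d := D`_0 in DE.
have d0 : d != 0 by rewrite -polyC_eq0 -DE.
exists d; split=> //; apply: (@mulIf _ (d ^+ 2)%:P).
  by rewrite polyC_eq0 expf_neq0.
by rewrite -polyCM mulfVK ?expf_neq0 // -gDc DE polyC_exp.
Qed.

Lemma deriv_eq0_of_wronskian_polyC {F : fieldType} {f R D : {poly F}} {c : F} :
  R != 0 -> (size R < size D)%N -> f^`() * D ^+ 2 + wronskian R D = c%:P ->
  f^`() = 0.
Proof.
move=> R0 sRD WfRD; apply/eqP/negPn/negP => df0.
have sR : (0 < size R)%N by rewrite size_poly_gt0.
have D0 : D != 0 by rewrite -size_poly_gt0 (ltn_trans sR sRD).
have sdf : (0 < size f^`())%N by rewrite size_poly_gt0.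
have sW := size_wronskian_le R0 D0.
have : (size (f^`() * D ^+ 2 + wronskian R D)%R <= 1)%N.
  by rewrite WfRD size_polyC_leq1.
rewrite size_polyDl expr2 !size_mul ?mulf_neq0 //; move: sW sdf sR sRD;
  set w := size _; set a := size f^`(); set b := size D; set r := size R; lia.
Qed.

Section Expansion.

Variables (F : fieldType) (p : nat).
Hypothesis pcharFp : p \in [pchar F].

Lemma cf_form_wronskian n (q : nat -> {poly F}) (a : F) : a != 0 ->
  exists N D (c : F), [/\ D != 0, c != 0, wronskian N D = c%:P
                       & cf_value (cf_form p n q a) = polyF N / polyF D].
Proof.
elim: n q => [|n IH] q a0.
  exists (q 0%N \Po 'X^p + a *: 'X), 1, a; split; rewrite ?oner_neq0 //.
    rewrite /wronskian derivD deriv_comp_Xp // derivZ derivX derivC add0r.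
    by rewrite mulr0 subr0 mulr1 alg_polyC.
  by rewrite /= /polyF tofrac1 divr1.
have [N [D [c [D0 c0 WND val]]]] := IH (fun i => q i.+1) a0.
have N0 : N != 0.
  apply: contra_neq c0 => N0.
  by move: WND; rewrite N0 wronskian0l => /polyC_inj.
exists ((q 0%N \Po 'X^p) * N + D), N, (- c); split; rewrite ?oppr_eq0 //.
  by rewrite wronskian_mulDl deriv_comp_Xp // mul0r add0r wronskianC WND polyCN.
by rewrite cf_formS cf_value_cons ?cf_form_neq_nil // val polyF_mulDl_div.
Qed.

Lemma cf_expansion_of_wronskian N D (c : F) :
  D != 0 -> c != 0 -> wronskian N D = c%:P ->
  exists n (q : nat -> {poly F}) (a : F),
    [/\ a != 0, cf_expansion (polyF N / polyF D) (cf_form p n q a)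
      & head 0 (cf_form p n q a) = N %/ D].
Proof.
have [k] := ubnP (size D); elim: k N D c => // k IH N D c sDk D0 c0 WND.
have NE := divp_eq N D; set f := N %/ D in NE *; set R := N %% D in NE.
have sRD : (size R < size D)%N by rewrite ltn_modp.
rewrite NE wronskian_mulDl in WND.
have [R0|R0] := eqVneq R 0.
  rewrite R0 wronskian0l addr0 in WND.
  have [d [d0 Dd df]] := mul_sqr_eq_polyC c0 WND.
  have [q0 fq0] := deriv_eq_polyC_comp_Xp pcharFp df.
  exists 0%N, (fun=> q0), (c / d ^+ 2); rewrite /cf_form /= -fq0.
  split=> //; first by rewrite mulf_neq0 ?invr_eq0 ?expf_neq0.
  split=> // [[|[]]|] //=.
  by rewrite {1}NE R0 addr0 /polyF tofracM mulfK ?tofrac_eq0.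
have df0 : f^`() = 0 := deriv_eq0_of_wronskian_polyC R0 sRD WND.
have [q0 fq0] := deriv_eq0_comp_Xp pcharFp df0.
rewrite df0 mul0r add0r in WND.
have WDR : wronskian D R = (- c)%:P by rewrite wronskianC WND polyCN.
have sRk : (size R < k)%N by rewrite -ltnS (leq_ltn_trans sRD sDk).
have Nc0 : - c != 0 by rewrite oppr_eq0.
have [n [q [a [a0 expDR headDR]]]] := IH D R (- c) sRk R0 Nc0 WDR.
exists n.+1, (fun i => if i is j.+1 then q j else q0), a.
rewrite cf_formS /= -fq0; split=> //.
rewrite {1}NE polyF_mulDl_div //; apply: cf_expansion_cons => //.
have sR : (0 < size R)%N by rewrite size_poly_gt0.
rewrite headDR size_divp //; move: sR sRD.
by set r := size R; set b := size D; lia.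
Qed.

End Expansion.

Arguments cf_form_wronskian {F p} pcharFp n q {a}.
Arguments cf_expansion_of_wronskian {F p} pcharFp {N D c}.

Lemma wronskian_polyC_of_no_critical_point
    {F : closedFieldType} {N D : {poly F}} :
  coprimep N D -> D != 0 ->
  (forall x, ~ finite_critical_point (polyF N / polyF D) x) ->
  exists2 c : F, c != 0 & wronskian N D = c%:P.
Proof.
move=> coND D0 noncrit.
have /negPn/eqP sW1 : ~~ (size (wronskian N D) != 1%N).
  apply/negP => /closed_rootP[x rootW].
  exact: noncrit x (finite_critical_point_of_root coND D0 rootW).
have WE := size1_polyC (eq_leq sW1).
by exists (wronskian N D)`_0; rewrite // -polyC_eq0 -WE -size_poly_eq0 sW1.
Qed.

Theorem theorem1p1 (F : closedFieldType) (p : nat) (hp : p \in [pchar F])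
    (phi : ratfun F) :
  (forall x : F, ~ finite_critical_point phi x) <->
  exists (n : nat) (q : nat -> {poly F}) (a : F),
    a != 0 /\ cf_expansion phi (cf_form p n q a).
Proof.
split=> [noncrit | [n [q [a [a0 [_ _ ->]]]]]].
  have [N [D [D0 coND phiE]]] := ratfun_coprime_numden phi.
  rewrite phiE in noncrit *.
  have [c c0 WND] := wronskian_polyC_of_no_critical_point coND D0 noncrit.
  have [n [q [a [a0 expND _]]]] := cf_expansion_of_wronskian hp D0 c0 WND.
  by exists n, q, a.
have [N [D [c [D0 c0 WND ->]]]] := cf_form_wronskian hp n q a0.
exact: no_finite_critical_point D0 c0 WND.
Qed.
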